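(* Let $N\ge 1$, $1<a_1<\cdots<a_N$, $\mathbf a=(a_1,\dots,a_N)$. If $f\in C^{(k)}(\mathbb{R})$ satisfies $f(x)+f(a_1x)+\cdots+f(a_Nx)=0$ for all $x\in\mathbb{R}$ and $k\ge m(\mathbf{a})$, then $f\equiv 0$. In particular, $f\equiv0$ is the only $C^\infty(\mathbb{R})$ function satisfying this equation for all real $x$.
   Context: With $a_0=1$, $m(\mathbf{a})=\min\{m\in\mathbb{N}: \sum_{k=0}^{N-1}(a_k/a_N)^m<1\}$. *)

From Stdlib Require Export Reals.
Open Scope R_scope.

Definition Ck (k : nat) (f : R -> R) : Prop :=
  exists g : nat -> R -> R,
    g 0%nat = f /\
    (forall i : nat, (i < k)%nat ->
       forall x : R, derivable_pt_lim (g i) x (g (S i) x)) /\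
    continuity (g k).

Definition Cinf (f : R -> R) : Prop := forall k : nat, Ck k f.

(** The sum  sum_{j=0}^{N-1} (a_j / a_N)^m  (with a_0 = 1). *)
Definition ratio_sum (a : nat -> R) (N m : nat) : R :=
  sum_f_R0 (fun j => (a j / a N) ^ m) (N - 1).

Definition is_m (a : nat -> R) (N m : nat) : Prop :=
  ratio_sum a N m < 1 /\ (forall m' : nat, ratio_sum a N m' < 1 -> (m <= m')%nat).

From Stdlib Require Import Reals Lra Lia Psatz FunctionalExtensionality.
Open Scope R_scope.

(* Let f be C^k with  sum_{l=0}^{N} f(a_l x) = 0  and let
   g_0 = f, g_1, ..., g_k be its successive derivatives.  Differentiating the
   equation i times gives  sum_l a_l^i g_i(a_l x) = 0  for every i <= k; at
   x = 0 the positive weights a_l^i force g_i(0) = 0.  For i = m = m(a) the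
   last term dominates:  sum_{l<N} a_l^m < a_N^m  is exactly the defining
   inequality  ratio_sum a N m < 1.  A maximum principle then shows g_m = 0:
   if |g_m| attains its maximum M on [-r, r] at y0, evaluating at y0 / a_N
   gives  a_N^m M <= (sum_{l<N} a_l^m) M,  so M = 0.  Finally g_m = 0 together
   with g_i(0) = 0 for i <= m integrates down to f = 0.  For the C^infinity
   statement it suffices that ratio_sum a N m < 1 for some m, which holds
   since (a_l / a_N)^m <= (a_{N-1} / a_N)^m -> 0. *)

Lemma derivable_pt_lim_dilate (c b : R) (h : R -> R) (h' x : R) :
  derivable_pt_lim h (b * x) h' ->
  derivable_pt_lim (fun y => c * h (b * y)) x (c * b * h').
Proof.
  intro Hh.
  assert (Hlin : derivable_pt_lim (fun y => b * y) x (b * 1)).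
  { exact (derivable_pt_lim_scal id b x 1 (derivable_pt_lim_id x)). }
  replace (c * b * h') with (c * (h' * (b * 1))) by ring.
  exact (derivable_pt_lim_scal _ c x _
           (derivable_pt_lim_comp (fun y => b * y) h x _ _ Hlin Hh)).
Qed.

Lemma derivable_pt_lim_dilated_sum (b : nat -> R) (i : nat) (h h' : R -> R) :
  (forall y, derivable_pt_lim h y (h' y)) ->
  forall n x,
    derivable_pt_lim (fun y => sum_f_R0 (fun l => b l ^ i * h (b l * y)) n) x
      (sum_f_R0 (fun l => b l ^ S i * h' (b l * x)) n).
Proof.
  intros Hh n x.
  assert (Hterm : forall l, derivable_pt_lim (fun y => b l ^ i * h (b l * y)) x
                              (b l ^ S i * h' (b l * x))).
  { intro l. replace (b l ^ S i) with (b l ^ i * b l) by (simpl; ring).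
    apply derivable_pt_lim_dilate, Hh. }
  induction n as [|n IH]; cbn [sum_f_R0]; [apply Hterm|].
  exact (derivable_pt_lim_plus _ (fun y => b (S n) ^ i * h (b (S n) * y))
           x _ _ IH (Hterm (S n))).
Qed.

Lemma dilation_equation_derivatives (b : nat -> R) (n k : nat)
  (g : nat -> R -> R) :
  (forall i, (i < k)%nat -> forall x, derivable_pt_lim (g i) x (g (S i) x)) ->
  (forall x, sum_f_R0 (fun l => g 0%nat (b l * x)) n = 0) ->
  forall i, (i <= k)%nat -> forall x,
    sum_f_R0 (fun l => b l ^ i * g i (b l * x)) n = 0.
Proof.
  intros Hder Heq i. induction i as [|i IH]; intros Hi x.
  - rewrite <- (Heq x). apply sum_eq. intros l _. simpl. ring.
  - assert (D := derivable_pt_lim_dilated_sum b i (g i) (g (S i))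
                   (Hder i ltac:(lia)) n x).
    assert (Hconst : (fun y => sum_f_R0 (fun l => b l ^ i * g i (b l * y)) n)
                     = fct_cte 0).
    { apply functional_extensionality. intro y. apply IH. lia. }
    rewrite Hconst in D.
    exact (uniqueness_limite _ _ _ _ D (derivable_pt_lim_const 0 x)).
Qed.

Lemma sum_f_R0_pos (c : nat -> R) (n : nat) :
  (forall l, (l <= n)%nat -> 0 < c l) -> 0 < sum_f_R0 c n.
Proof.
  induction n as [|n IH]; intro Hc; cbn [sum_f_R0].
  - apply Hc; lia.
  - assert (0 < c (S n)) by (apply Hc; lia).
    assert (0 < sum_f_R0 c n) by (apply IH; intros; apply Hc; lia). lra.
Qed.

(* At x = 0 a dilation equation with positive dilations reads
   (sum_l b_l^i) h(0) = 0, hence h(0) = 0. *)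
Lemma dilation_equation_at_zero (b : nat -> R) (n i : nat) (h : R -> R) :
  (forall l, (l <= n)%nat -> 0 < b l) ->
  sum_f_R0 (fun l => b l ^ i * h (b l * 0)) n = 0 -> h 0 = 0.
Proof.
  intros Hb Heq.
  rewrite (sum_eq _ (fun l => b l ^ i * h 0)), <- scal_sum in Heq
    by (intros l _; rewrite Rmult_0_r; reflexivity).
  assert (0 < sum_f_R0 (fun l => b l ^ i) n)
    by (apply sum_f_R0_pos; intros l Hl; apply pow_lt, Hb, Hl).
  destruct (Rmult_integral _ _ Heq); [assumption | lra].
Qed.

(* Maximum principle: if in a dilation equation the term h(B x) with the
   largest dilation B carries a weight W exceeding the total weight of the
   others, then a continuous solution h vanishes identically. *)
Lemma dominated_dilation_equation_zero (h : R -> R) (n : nat)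
  (w b : nat -> R) (W B : R) :
  continuity h -> 0 < B -> sum_f_R0 w n < W ->
  (forall l, (l <= n)%nat -> 0 <= w l /\ 0 <= b l <= B) ->
  (forall x, sum_f_R0 (fun l => w l * h (b l * x)) n + W * h (B * x) = 0) ->
  forall x, h x = 0.
Proof.
  intros Hc HB HW Hwb Heq x.
  set (r := Rabs x).
  assert (Hr : 0 <= r) by apply Rabs_pos.
  destruct (continuity_ab_maj (fun y => Rabs (h y)) (- r) r ltac:(lra))
    as [y0 [Hmax Hy0]].
  { intros c _. apply (continuity_pt_comp h Rabs); [apply Hc | apply Rcontinuity_abs]. }
  set (M := Rabs (h y0)) in *.
  assert (HM : 0 <= M) by apply Rabs_pos.
  assert (HW0 : 0 <= W).
  { enough (0 <= sum_f_R0 w n) by lra.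
    apply Rle_trans with (sum_f_R0 (fun _ => 0) n).
    - rewrite sum_cte. lra.
    - apply sum_Rle. intros l Hl. apply Hwb, Hl. }
  (* Evaluating the equation at y0 / B: every other argument stays in [-r,r]. *)
  assert (Hbound : W * M <= sum_f_R0 w n * M).
  { assert (Hy := Heq (y0 / B)).
    replace (B * (y0 / B)) with y0 in Hy by (field; lra).
    replace (W * M) with (Rabs (sum_f_R0 (fun l => w l * h (b l * (y0 / B))) n)).
    2:{ replace (sum_f_R0 (fun l => w l * h (b l * (y0 / B))) n) with (- (W * h y0))
          by lra.
        rewrite Rabs_Ropp, Rabs_mult, (Rabs_right W) by lra. reflexivity. }
    eapply Rle_trans; [apply sum_f_R0_triangle|].
    rewrite (Rmult_comm _ M), scal_sum. apply sum_Rle. intros l Hl.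
    destruct (Hwb l Hl) as [Hwl Hbl].
    rewrite Rabs_mult, (Rabs_right (w l)) by lra.
    apply Rmult_le_compat_l; [lra|].
    apply Hmax.
    set (y := b l * (y0 / B)).
    assert (HyB : y * B = b l * y0) by (unfold y; field; lra).
    split; nra. }
  assert (HM0 : M = 0) by nra.
  assert (Hx : Rabs (h x) <= M).
  { apply Hmax. unfold r.
    split; [pose proof (Rabs_Ropp x); pose proof (Rle_abs (- x)) | apply Rle_abs]; lra. }
  destruct (Req_dec (h x) 0) as [|Hne]; [assumption|].
  pose proof (Rabs_pos_lt _ Hne). lra.
Qed.

Lemma derivative_chain_vanishes (m : nat) (g : nat -> R -> R) :
  (forall i, (i < m)%nat -> forall x, derivable_pt_lim (g i) x (g (S i) x)) ->
  (forall i, (i <= m)%nat -> g i 0 = 0) ->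
  (forall x, g m x = 0) -> forall x, g 0%nat x = 0.
Proof.
  revert g. induction m as [|m IH]; intros g Hder Hzero Hlast; [exact Hlast|].
  assert (Hg1 : forall y, g 1%nat y = 0).
  { apply (IH (fun i => g (S i))).
    - intros i Hi. apply Hder. lia.
    - intros i Hi. apply Hzero. lia.
    - exact Hlast. }
  assert (Hconst := null_derivative_1 (g 0%nat)
                      (fun y => exist _ _ (Hder 0%nat ltac:(lia) y)) Hg1).
  unfold constant in Hconst.
  intro x. rewrite (Hconst x 0). apply Hzero. lia.
Qed.

(* Undoing the normalization: a_{n+1}^m * sum_{l<=n} (a_l / a_{n+1})^m is
   sum_{l<=n} a_l^m, so ratio_sum < 1 means a_{n+1}^m dominates. *)
Lemma ratio_sum_scaled (a : nat -> R) (n m : nat) :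
  a (S n) <> 0 ->
  a (S n) ^ m * ratio_sum a (S n) m = sum_f_R0 (fun l => a l ^ m) n.
Proof.
  intro HaN. unfold ratio_sum. replace (S n - 1)%nat with n by lia.
  rewrite scal_sum. apply sum_eq. intros l _.
  rewrite <- Rpow_mult_distr. f_equal. field. exact HaN.
Qed.

Section IncreasingDilations.

Variables (N : nat) (a : nat -> R).
Hypothesis hN : (1 <= N)%nat.
Hypothesis ha0 : a 0%nat = 1.
Hypothesis hmono : forall i, (i < N)%nat -> a i < a (S i).

Lemma dilations_monotone (i j : nat) : (i <= j <= N)%nat -> a i <= a j.
Proof.
  revert i. induction j as [|j IH]; intros i Hij.
  - replace i with 0%nat by lia. lra.
  - destruct (Nat.eq_dec i (S j)) as [->|Hne]; [lra|].
    assert (a i <= a j) by (apply IH; lia).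
    assert (a j < a (S j)) by (apply hmono; lia). lra.
Qed.

Lemma dilations_ge_1 (l : nat) : (l <= N)%nat -> 1 <= a l.
Proof. intro Hl. rewrite <- ha0. apply dilations_monotone. lia. Qed.

(* m(a) is well defined: (a_l / a_N)^m <= (a_{N-1} / a_N)^m tends to 0. *)
Lemma ratio_sum_eventually_lt_1 : exists m, ratio_sum a N m < 1.
Proof.
  destruct (Nat.le_exists_sub 1 N hN) as [n [HNn _]].
  rewrite Nat.add_1_r in HNn. rewrite HNn.
  assert (Hn : 1 <= a n) by (apply dilations_ge_1; lia).
  assert (HnS : a n < a (S n)) by (apply hmono; lia).
  set (q := a n / a (S n)).
  assert (Hq : q * a (S n) = a n) by (unfold q; field; lra).
  assert (Hterm : forall l, (l <= n)%nat -> 0 <= a l / a (S n) <= q).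
  { intros l Hl.
    assert (1 <= a l) by (apply dilations_ge_1; lia).
    assert (a l <= a n) by (apply dilations_monotone; lia).
    assert (Hl' : a l / a (S n) * a (S n) = a l) by (field; lra).
    split; nra. }
  assert (Hq1 : 0 <= q < 1) by nra.
  assert (HSn : 0 < INR (S n)) by (apply lt_0_INR; lia).
  destruct (pow_lt_1_zero q ltac:(rewrite Rabs_right; lra) (/ INR (S n))
              ltac:(apply Rinv_0_lt_compat; lra)) as [m Hm].
  exists m. specialize (Hm m (le_n m)).
  rewrite Rabs_right in Hm by (apply Rle_ge, pow_le; lra).
  unfold ratio_sum. replace (S n - 1)%nat with n by lia.
  apply Rle_lt_trans with (sum_f_R0 (fun _ => q ^ m) n).
  - apply sum_Rle. intros l Hl. apply pow_incr, Hterm, Hl.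
  - rewrite sum_cte.
    apply Rmult_lt_compat_r with (r := INR (S n)) in Hm; [|exact HSn].
    rewrite Rinv_l in Hm by lra. exact Hm.
Qed.

Lemma Ck_dilation_solution_zero (m k : nat) (f : R -> R) :
  ratio_sum a N m < 1 -> (m <= k)%nat -> Ck k f ->
  (forall x, sum_f_R0 (fun i => f (a i * x)) N = 0) ->
  forall x, f x = 0.
Proof.
  intros Hratio Hmk [g [Hg0 [Hder Hcont]]] Heq. subst f.
  assert (Hpos : forall l, (l <= N)%nat -> 0 < a l)
    by (intros l Hl; pose proof (dilations_ge_1 l Hl); lra).
  assert (Hdiff := dilation_equation_derivatives a N k g Hder Heq).
  assert (Hzero : forall i, (i <= m)%nat -> g i 0 = 0)
    by (intros i Hi; exact (dilation_equation_at_zero a N i (g i) Hpos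
                              (Hdiff i ltac:(lia) 0))).
  assert (Hcont_m : continuity (g m)).
  { destruct (Nat.eq_dec m k) as [->|Hne]; [exact Hcont|].
    intro x. apply derivable_continuous_pt.
    exact (exist _ _ (Hder m ltac:(lia) x)). }
  (* The top dilation a_N dominates the differentiated equation of order m. *)
  assert (Hgm : forall x, g m x = 0).
  { destruct (Nat.le_exists_sub 1 N hN) as [n [HNn _]].
    rewrite Nat.add_1_r in HNn. rewrite HNn in Hratio, Hdiff.
    assert (HaN : 0 < a (S n)) by (apply Hpos; lia).
    apply (dominated_dilation_equation_zero (g m) n (fun l => a l ^ m) a
             (a (S n) ^ m) (a (S n)) Hcont_m HaN).
    - rewrite <- (ratio_sum_scaled a n m) by lra.
      pose proof (pow_lt _ m HaN). nra.
    - intros l Hl. pose proof (Hpos l ltac:(lia)).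
      split; [apply pow_le; lra|].
      split; [lra | apply dilations_monotone; lia].
    - intro x. rewrite <- tech5. apply Hdiff. exact Hmk. }
  exact (derivative_chain_vanishes m g
           (fun i Hi => Hder i ltac:(lia)) Hzero Hgm).
Qed.

End IncreasingDilations.

Theorem mainTheorem2 (N : nat) (a : nat -> R)
  (hN : (1 <= N)%nat)
  (ha0 : a 0%nat = 1)
  (hmono : forall i : nat, (i < N)%nat -> a i < a (S i)) :
  (forall (mA k : nat) (f : R -> R),
     is_m a N mA -> (mA <= k)%nat -> Ck k f ->
     (forall x : R, sum_f_R0 (fun i => f (a i * x)) N = 0) ->
     forall x : R, f x = 0) /\
  (forall f : R -> R, Cinf f ->
     (forall x : R, sum_f_R0 (fun i => f (a i * x)) N = 0) ->
     forall x : R, f x = 0).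
Proof.
  split.
  - intros mA k f [Hratio _].
    exact (Ck_dilation_solution_zero N a hN ha0 hmono mA k f Hratio).
  - intros f Hsmooth.
    destruct (ratio_sum_eventually_lt_1 N a hN ha0 hmono) as [m Hratio].
    exact (Ck_dilation_solution_zero N a hN ha0 hmono m m f Hratio
             (le_n m) (Hsmooth m)).
Qed.
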